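(* No rank $16$ rootless integral lattice $Q$ with $\mathcal{D}(Q)\cong5^4$ is isometric to a sublattice of $HS_{16}$.
   Context: All lattices are positive definite; rootless means no vectors of norm $2$; $\mathcal{D}(L)=L^*/L$. $HS_{16}$ denotes the rank $16$ even unimodular lattice not isometric to $E_8\perp E_8$ (the lattice $D_{16}^+$, whose root sublattice is $D_{16}$). *)

(* Lattices are encoded by integer Gram matrices; vectors are
   row vectors over rat (coordinates w.r.t. the chosen basis). *)
From HB Require Import structures.
From mathcomp Require Import all_boot all_order all_algebra.
Set Implicit Arguments. Unset Strict Implicit. Unset Printing Implicit Defensive.
Import Order.TTheory GRing.Theory Num.Theory.
Local Open Scope ring_scope.

Definition is_intq (q : rat) : Prop := exists z : int, q = z%:~R.

Definition intvec (n : nat) (x : 'rV[rat]_n) : Prop := forall i, is_intq (x 0 i).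

Definition gramQ (n : nat) (G : 'M[int]_n) : 'M[rat]_n := map_mx (fun z : int => z%:~R) G.

Definition bform (n : nat) (G : 'M[int]_n) (x y : 'rV[rat]_n) : rat :=
  (x *m gramQ G *m y^T) 0 0.

Definition pos_def_integral_gram (n : nat) (G : 'M[int]_n) : Prop :=
  G^T = G /\ forall x : 'rV[rat]_n, x != 0 -> 0 < bform G x x.

Definition rootless (n : nat) (G : 'M[int]_n) : Prop :=
  ~ exists x : 'rV[rat]_n, intvec x /\ bform G x x = 2.

Definition in_dual (n : nat) (G : 'M[int]_n) (x : 'rV[rat]_n) : Prop :=
  forall y : 'rV[rat]_n, intvec y -> is_intq (bform G x y).

(* D(L) = L^*/L is isomorphic to the abelian group A : there is a surjective
   group homomorphism L^* -> A whose kernel is exactly L (first isomorphism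
   theorem). *)
Definition disc_group_iso (n : nat) (G : 'M[int]_n) (A : zmodType) : Prop :=
  exists f : 'rV[rat]_n -> A,
    [/\ forall x y, in_dual G x -> in_dual G y -> f (x + y) = f x + f y,
        forall a : A, exists2 x, in_dual G x & f x = a
      & forall x, in_dual G x -> (f x = 0 <-> intvec x)].

(* HS_16 = D_16^+ = D_16 u (D_16 + (1/2,...,1/2)) inside Q^16 with the
   standard inner product. *)
Definition in_D (n : nat) (x : 'rV[rat]_n) : Prop :=
  intvec x /\ exists z : int, \sum_i x 0 i = 2 * z%:~R.

Definition halfvec (n : nat) : 'rV[rat]_n := const_mx (1 / 2).

Definition in_HS16 (x : 'rV[rat]_16) : Prop :=
  in_D x \/ in_D (x - halfvec 16).

(* the lattice with Gram matrix G is isometric to a sublattice of HS_16: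
   there are vectors b_1..b_16 of HS_16 (rows of B) whose Gram matrix
   (standard inner product) is G; the sublattice is Z b_1 + ... + Z b_16. *)
Definition iso_to_sublattice_HS16 (G : 'M[int]_16) : Prop :=
  exists B : 'M[rat]_16,
    (forall i, in_HS16 (row i B)) /\ B *m B^T = gramQ G.

(* Let B embed L = Z^16 (Gram matrix G) into HS_16. As D_16 pairs integrally with
   HS_16, its pull-back lies in the dual L^*. The roots e_i +- e_j of D_16 are not in the
   rootless L, and 2 is invertible mod 5, so the classes w_i of 2 e_i in D(L) = F_5^4
   satisfy w_i <> +- w_j for i <> j. As D_16 is integral, the w_i span a totally
   isotropic subspace for the nondegenerate discriminant form, of dimension <= 2, hence
   of order <= 25; but w_i <> +- w_j makes the w_i and their negatives at least 31
   distinct vectors. *)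

From HB Require Import structures.
From mathcomp Require Import all_boot all_order all_algebra mxabelem.
Set Implicit Arguments. Unset Strict Implicit. Unset Printing Implicit Defensive.
Import Order.TTheory GRing.Theory Num.Theory.
Local Open Scope ring_scope.

Local Notation "''[' x , y ]" := ((x *m y^T) 0 0) : ring_scope.
Local Notation "''[' x ]" := '[x, x] : ring_scope.

Lemma intvecP n (x : 'rV[rat]_n) : intvec x <-> forall i, x 0 i \is a Num.int.
Proof. by split=> hx i; apply/intrP; apply: hx. Qed.

Lemma intvecD n (x y : 'rV[rat]_n) : intvec x -> intvec y -> intvec (x + y).
Proof. by move=> /intvecP hx /intvecP hy; apply/intvecP => i; rewrite mxE rpredD. Qed.

Lemma intvecN n (x : 'rV[rat]_n) : intvec x -> intvec (- x).
Proof. by move=> /intvecP hx; apply/intvecP => i; rewrite mxE rpredN. Qed.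

Lemma intvec_delta n (i : 'I_n) : intvec ('e_i : 'rV[rat]_n).
Proof. by apply/intvecP => k; rewrite mxE natr_int. Qed.

Lemma dot_rowE n (x y : 'rV[rat]_n) : '[x, y] = \sum_k x 0 k * y 0 k.
Proof. by rewrite mxE; apply: eq_bigr => k _; rewrite mxE. Qed.

Lemma dot_intvec n (x y : 'rV[rat]_n) :
  intvec x -> intvec y -> '[x, y] \is a Num.int.
Proof.
by move=> /intvecP hx /intvecP hy; rewrite dot_rowE rpred_sum // => k _; rewrite rpredM.
Qed.

Lemma dot_deltaD n (i j : 'I_n) : i != j -> '[('e_i + 'e_j : 'rV[rat]_n)] = 2.
Proof.
move=> ij; rewrite linearD /= !trmx_delta mulmxDl !mulmxDr !mul_delta_mx_cond.
by rewrite !mxE !mulmxnE !mxE !eqxx [j == i]eq_sym (negPf ij).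
Qed.

Lemma dot_deltaB n (i j : 'I_n) : i != j -> '[('e_i - 'e_j : 'rV[rat]_n)] = 2.
Proof.
move=> ij; rewrite linearB /= !trmx_delta mulmxBl !mulmxBr !mul_delta_mx_cond.
by rewrite !mxE !mulmxnE !mxE !eqxx [j == i]eq_sym (negPf ij).
Qed.

Lemma sum_rowD n (x y : 'rV[rat]_n) : \sum_i (x + y) 0 i = \sum_i x 0 i + \sum_i y 0 i.
Proof. by rewrite -big_split; apply: eq_bigr => i _; rewrite mxE. Qed.

Lemma sum_rowN n (x : 'rV[rat]_n) : \sum_i (- x) 0 i = - \sum_i x 0 i.
Proof. by rewrite -sumrN; apply: eq_bigr => i _; rewrite mxE. Qed.

Lemma sum_delta n (i : 'I_n) : \sum_k ('e_i : 'rV[rat]_n) 0 k = 1.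
Proof. by rewrite (bigD1 i) //= big1 ?addr0 => [|k /negPf ki]; rewrite mxE ?eqxx ?ki. Qed.

Lemma in_D0 n : in_D (0 : 'rV[rat]_n).
Proof.
split; first by apply/intvecP => i; rewrite mxE.
by exists 0; rewrite big1 ?mulr0 // => i _; rewrite mxE.
Qed.

Lemma in_DD n (x y : 'rV[rat]_n) : in_D x -> in_D y -> in_D (x + y).
Proof.
move=> [hx [a ha]] [hy [b hb]]; split; first exact: intvecD.
by exists (a + b); rewrite sum_rowD ha hb rmorphD mulrDr.
Qed.

Lemma in_DN n (x : 'rV[rat]_n) : in_D x -> in_D (- x).
Proof.
move=> [hx [a ha]]; split; first exact: intvecN.
by exists (- a); rewrite sum_rowN ha rmorphN mulrN.
Qed.

Lemma in_D_deltaD n (i j : 'I_n) : in_D ('e_i + 'e_j : 'rV[rat]_n).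
Proof.
split; first by apply: intvecD; apply: intvec_delta.
by exists 1; rewrite sum_rowD !sum_delta mulr1.
Qed.

Lemma in_D_deltaB n (i j : 'I_n) : in_D ('e_i - 'e_j : 'rV[rat]_n).
Proof.
split; first by apply: intvecD; [|apply: intvecN]; apply: intvec_delta.
by exists 0; rewrite sum_rowD sum_rowN !sum_delta subrr mulr0.
Qed.

Lemma in_D_delta2 n (i : 'I_n) : in_D ('e_i *+ 2 : 'rV[rat]_n).
Proof. by rewrite mulr2n; apply: in_D_deltaD. Qed.

Lemma in_D_halfvec2 n : ~~ odd n -> in_D (halfvec n *+ 2).
Proof.
move=> n_even; have half2 : (1 / 2 : rat) *+ 2 = 1 by [].
split; first by apply/intvecP => i; rewrite mulmxnE mxE half2.
exists n./2%:Z; rewrite (eq_bigr (fun=> 1)) => [|i _]; last by rewrite mulmxnE mxE half2.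
rewrite sumr_const card_ord -[n in LHS]odd_double_half (negPf n_even) add0n.
by rewrite -mul2n natrM pmulrn.
Qed.

Lemma dot_D_halfvec n (x : 'rV[rat]_n) : in_D x -> '[x, halfvec n] \is a Num.int.
Proof.
move=> [_ [a ha]]; rewrite dot_rowE (eq_bigr (fun k => x 0 k / 2)) => [|k _]; last first.
  by rewrite mxE mul1r.
by rewrite -mulr_suml ha mulrAC divff // mul1r intr_int.
Qed.

Lemma in_HS16D x y : in_HS16 x -> in_HS16 y -> in_HS16 (x + y).
Proof.
have shift a b : a + b - halfvec 16 = a + (b - halfvec 16) by rewrite addrA.
move=> [hx|hx] [hy|hy]; first by left; apply: in_DD.
- by right; rewrite shift; apply: in_DD.
- by right; rewrite (addrC x) shift; apply: in_DD.
left; have -> : x + y = (x - halfvec 16) + (y - halfvec 16) + halfvec 16 *+ 2.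
  by rewrite mulr2n addrACA !subrK.
by apply: in_DD; [apply: in_DD | exact: in_D_halfvec2].
Qed.

Lemma in_HS16N x : in_HS16 x -> in_HS16 (- x).
Proof.
move=> [hx|hx]; first by left; apply: in_DN.
right; have -> : - x - halfvec 16 = - (x - halfvec 16) - halfvec 16 *+ 2.
  by rewrite mulr2n opprB opprD addrA addrAC subrr add0r.
by apply: in_DD; apply: in_DN => //; exact: in_D_halfvec2.
Qed.

Lemma in_HS16Mz x (z : int) : in_HS16 x -> in_HS16 (z%:~R *: x).
Proof.
have in_HS16Mn n : in_HS16 x -> in_HS16 (x *+ n).
  move=> hx; elim: n => [|n IHn]; first by left; rewrite mulr0n; apply: in_D0.
  by rewrite mulrS; apply: in_HS16D.
move=> hx; case: z => n; first by rewrite -pmulrn scaler_nat; apply: in_HS16Mn.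
by rewrite NegzE rmorphN /= -pmulrn scaleNr scaler_nat; apply/in_HS16N/in_HS16Mn.
Qed.

Lemma in_HS16_comb (B : 'M[rat]_16) y :
  (forall i, in_HS16 (row i B)) -> intvec y -> in_HS16 (y *m B).
Proof.
move=> hB hy; rewrite mulmx_sum_row.
apply: big_ind => [|u v|i _]; [by left; apply: in_D0 | exact: in_HS16D |].
by have [z ->] := hy i; apply: in_HS16Mz.
Qed.

Lemma dot_D_HS16 x w : in_D x -> in_HS16 w -> '[x, w] \is a Num.int.
Proof.
move=> hx [[hw _]|[hw _]]; first exact: dot_intvec (proj1 hx) hw.
rewrite -(subrK (halfvec 16) w) linearD /= mulmxDr mxE.
by rewrite rpredD ?dot_D_halfvec ?dot_intvec //; case: hx.
Qed.

Section BilinearForm.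
Variables (n : nat) (G : 'M[int]_n).

Lemma bformDl x y z : bform G (x + y) z = bform G x z + bform G y z.
Proof. by rewrite /bform !mulmxDl mxE. Qed.

Lemma bformDr x y z : bform G z (x + y) = bform G z x + bform G z y.
Proof. by rewrite /bform linearD /= mulmxDr mxE. Qed.

Lemma bformNl x y : bform G (- x) y = - bform G x y.
Proof. by rewrite /bform !mulNmx mxE. Qed.

Lemma bformNr x y : bform G y (- x) = - bform G y x.
Proof. by rewrite /bform linearN /= mulmxN mxE. Qed.

Lemma bformMnl x y k : bform G (x *+ k) y = bform G x y *+ k.
Proof. by rewrite /bform -!scaler_nat -!scalemxAl mxE mulr_natl. Qed.

Lemma bformMnr x y k : bform G y (x *+ k) = bform G y x *+ k.
Proof. by rewrite /bform raddfMn /= -scaler_nat -scalemxAr mxE mulr_natl. Qed.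

Lemma bform_suml (I : finType) (F : I -> 'rV[rat]_n) y :
  bform G (\sum_i F i) y = \sum_i bform G (F i) y.
Proof. by rewrite /bform !mulmx_suml summxE. Qed.

Lemma bform_sumr (I : finType) (F : I -> 'rV[rat]_n) y :
  bform G y (\sum_i F i) = \sum_i bform G y (F i).
Proof. by rewrite /bform raddf_sum mulmx_sumr summxE. Qed.

Lemma bformC x y : G^T = G -> bform G x y = bform G y x.
Proof.
move=> Gsym; rewrite /bform -[in LHS](trmxK (x *m _ *m _)) mxE !trmx_mul trmxK.
by rewrite mulmxA /gramQ map_trmx Gsym.
Qed.

Lemma bform_factor (B : 'M[rat]_n) x y :
  B *m B^T = gramQ G -> bform G x y = '[x *m B, y *m B].
Proof. by move=> BBt; rewrite /bform -BBt trmx_mul !mulmxA. Qed.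

Lemma dualD x y : in_dual G x -> in_dual G y -> in_dual G (x + y).
Proof.
move=> hx hy z hz; apply/intrP; rewrite bformDl rpredD //; apply/intrP; [exact: hx | exact: hy].
Qed.

Lemma dualN x : in_dual G x -> in_dual G (- x).
Proof. by move=> hx z /hx /intrP hz; apply/intrP; rewrite bformNl rpredN. Qed.

Lemma dualMn x k : in_dual G x -> in_dual G (x *+ k).
Proof. by move=> hx z /hx /intrP hz; apply/intrP; rewrite bformMnl rpredMn. Qed.

Lemma dual_sum (I : finType) (F : I -> 'rV[rat]_n) :
  (forall i, in_dual G (F i)) -> in_dual G (\sum_i F i).
Proof.
move=> hF z hz; apply/intrP; rewrite bform_suml rpred_sum // => i _.
exact/intrP/hF.
Qed.

Lemma bidual_intvec x : G^T = G -> gramQ G \in unitmx ->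
  (forall y, in_dual G y -> bform G x y \is a Num.int) -> intvec x.
Proof.
move=> Gsym Gu hx; apply/intvecP => k.
pose g : 'rV[rat]_n := 'e_k *m invmx (gramQ G).
have gE y : bform G g y = y 0 k by rewrite /bform mulmxKV // -rowE !mxE.
by rewrite -gE bformC // hx // => y /intvecP hy; rewrite gE; apply/intrP.
Qed.

End BilinearForm.

Section AdditiveOnDual.
Variables (n : nat) (G : 'M[int]_n) (A : zmodType) (f : 'rV[rat]_n -> A).
Hypothesis fD : forall x y, in_dual G x -> in_dual G y -> f (x + y) = f x + f y.

Lemma dual0 : in_dual G 0.
Proof. by move=> y _; apply/intrP; rewrite /bform !mul0mx mxE. Qed.

Lemma dualf0 : f 0 = 0.
Proof. by apply: (addrI (f 0)); rewrite -fD ?addr0 //; exact: dual0. Qed.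

Lemma dualfN x : in_dual G x -> f (- x) = - f x.
Proof.
by move=> hx; apply/eqP; rewrite -addr_eq0 -fD ?addNr ?dualf0 //; exact: dualN.
Qed.

Lemma dualfMn x k : in_dual G x -> f (x *+ k) = f x *+ k.
Proof.
move=> hx; elim: k => [|k IHk]; first by rewrite !mulr0n dualf0.
by rewrite !mulrS fD ?IHk //; exact: dualMn.
Qed.

Lemma dualf_sum (I : finType) (F : I -> 'rV[rat]_n) :
  (forall i, in_dual G (F i)) -> f (\sum_i F i) = \sum_i f (F i).
Proof.
move=> hF; pose P x a := in_dual G x /\ f x = a.
suff [] : P (\sum_i F i) (\sum_i f (F i)) by [].
apply: (big_ind2 P) => [|x1 a1 x2 a2 [h1 <-] [h2 <-]|i _]; last by split.
  by split; [exact: dual0 | exact: dualf0].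
by split; [exact: dualD | exact: fD].
Qed.

End AdditiveOnDual.

Section ReductionModp.
Variable p : nat.
Hypothesis p_pr : prime p.

(* Reduction mod p, meaningful on integers only (elsewhere it reduces the numerator). *)
Definition ratFp (q : rat) : 'F_p := (numq q)%:~R.

Lemma ratFp_int (z : int) : ratFp z%:~R = z%:~R.
Proof. by rewrite /ratFp numq_int. Qed.

Lemma ratFpD a b : a \is a Num.int -> b \is a Num.int -> ratFp (a + b) = ratFp a + ratFp b.
Proof. by move=> /intrP[x ->] /intrP[y ->]; rewrite -rmorphD !ratFp_int rmorphD. Qed.

Lemma ratFpM a b : a \is a Num.int -> b \is a Num.int -> ratFp (a * b) = ratFp a * ratFp b.
Proof. by move=> /intrP[x ->] /intrP[y ->]; rewrite -rmorphM !ratFp_int rmorphM. Qed.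

Lemma ratFp_nat k : ratFp k%:R = k%:R.
Proof. by rewrite pmulrn ratFp_int. Qed.

Lemma ratFpMn a k : a \is a Num.int -> ratFp (a *+ k) = ratFp a *+ k.
Proof. by move=> ha; rewrite -[a *+ k]mulr_natr ratFpM ?natr_int // ratFp_nat mulr_natr. Qed.

Lemma ratFp_sum (I : finType) (F : I -> rat) :
  (forall i, F i \is a Num.int) -> ratFp (\sum_i F i) = \sum_i ratFp (F i).
Proof.
move=> hF; pose P x a := x \is a Num.int /\ ratFp x = a.
suff [] : P (\sum_i F i) (\sum_i ratFp (F i)) by [].
apply: (big_ind2 P) => [|x1 a1 x2 a2 [h1 <-] [h2 <-]|i _]; last by split.
  by split; rewrite // -(mulr0n 1) ratFp_nat.
by split; [rewrite rpredD | rewrite ratFpD].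
Qed.

Lemma ratFp_pmul a : a \is a Num.int -> ratFp (p%:R * a) = 0.
Proof. by move=> ha; rewrite ratFpM ?natr_int // ratFp_nat pchar_Fp_0 ?mul0r. Qed.

Lemma ratFp_eq0 a : a \is a Num.int -> ratFp a = 0 -> a / p%:R \is a Num.int.
Proof.
move=> /intrP[z ->]; rewrite ratFp_int => /eqP.
rewrite -(dvdz_pcharf (pchar_Fp p_pr)) => /dvdzP[c ->].
by rewrite rmorphM /= mulfK // pnatr_eq0 -lt0n prime_gt0.
Qed.

End ReductionModp.

Lemma mulmx_quadE (R : comNzRingType) m (u v : 'rV[R]_m) (M : 'M[R]_m) :
  '[u *m M, v] = \sum_k \sum_l u 0 k * M k l * v 0 l.
Proof.
rewrite mxE exchange_big /=; apply: eq_bigr => l _.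
by rewrite !mxE mulr_suml.
Qed.

Lemma mulmx_tr_entry (R : pzRingType) k l m (U : 'M[R]_(k, m)) (V : 'M[R]_(l, m))
    (M : 'M[R]_m) i j :
  (U *m M *m V^T) i j = '[row i U *m M, row j V].
Proof.
rewrite !mxE; apply: eq_bigr => a _; rewrite !mxE; congr (_ * _).
by apply: eq_bigr => b _; rewrite !mxE.
Qed.

Lemma double_eq0 (F : fieldType) (V : lmodType F) :
  2%:R != 0 :> F -> forall v : V, v + v = 0 -> v = 0.
Proof.
by move=> two_neq0 v /eqP; rewrite -mulr2n -scaler_nat scaler_eq0 (negPf two_neq0) => /eqP.
Qed.

Lemma isotropic_rank (F : fieldType) k m (W : 'M[F]_(k, m)) (M : 'M[F]_m) :
  row_free M -> W *m M *m W^T = 0 -> ((\rank W).*2 <= m)%N.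
Proof.
move=> Mfree WMW; have := mxrank_mul_min (W *m M) W^T.
by rewrite WMW mxrank0 mxrankMfree // mxrank_tr leqn0 subn_eq0 -addnn.
Qed.

Lemma card_signed_family (V : finZmodType) (S : {set V}) k (w : 'I_k -> V) :
  (forall v : V, v + v = 0 -> v = 0) ->
  (forall i j, i != j -> w i != w j /\ w i != - w j) ->
  (forall i, w i \in S) -> (forall v, v \in S -> - v \in S) -> ((k.*2).-1 <= #|S|)%N.
Proof.
move=> V2 w_sign wS SN.
have w_inj : injective w.
  by move=> i j wij; apply/eqP/negPn/negP => /w_sign[/eqP].
pose A := [set w i | i in 'I_k]; pose A' := [set - w i | i in 'I_k].
have cardA : #|A| = k by rewrite card_imset ?card_ord.
have cardA' : #|A'| = k by rewrite card_imset ?card_ord // => i j /oppr_inj /w_inj.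
have AA'_sub1 : A :&: A' \subset [set 0].
  apply/subsetP => _ /setIP[/imsetP[i _ ->] /imsetP[j _ wij]].
  have ij : i = j by apply/eqP/negPn/negP => /w_sign[_ /eqP].
  by move: wij; rewrite ij inE => /eqP; rewrite -addr_eq0 => /eqP/V2 ->.
have : A :|: A' \subset S.
  by apply/subsetP => _ /setUP[] /imsetP[i _ ->]; [|apply: SN]; apply: wS.
move=> /subset_leq_card; apply: leq_trans.
have := subset_leq_card AA'_sub1; rewrite cards1 -(leq_add2l #|A :|: A'|) cardsUI.
by rewrite cardA cardA' addnn -subn1 leq_subLR addnC.
Qed.

(* f identifies L^*/L with 'F_p^m and d k lifts the k-th basis vector. As p L^* <= L,
   [pform] is integral on L^*; mod p it is the form with Gram matrix [disc_gram], which
   is nondegenerate because L^** = L. *)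
Section DiscriminantForm.
Variables (n m p : nat) (G : 'M[int]_n) (f : 'rV[rat]_n -> 'rV['F_p]_m).
Variable d : 'I_m -> 'rV[rat]_n.
Hypotheses (p_pr : prime p) (Gsym : G^T = G) (Gu : gramQ G \in unitmx).
Hypothesis fD : forall x y, in_dual G x -> in_dual G y -> f (x + y) = f x + f y.
Hypothesis fker : forall x, in_dual G x -> (f x = 0 <-> intvec x).
Hypotheses (d_dual : forall k, in_dual G (d k)) (fd : forall k, f (d k) = 'e_k).

Local Notation pform x y := (p%:R * bform G x y).

Definition disc_lift (a : 'rV['F_p]_m) : 'rV[rat]_n := \sum_k d k *+ a 0 k.

Definition disc_gram : 'M['F_p]_m := \matrix_(k, l) ratFp p (pform (d k) (d l)).

Lemma disc_lift_dual a : in_dual G (disc_lift a).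
Proof. by apply: dual_sum => k; apply: dualMn. Qed.

Lemma f_disc_lift a : f (disc_lift a) = a.
Proof.
rewrite (dualf_sum fD) => [|k]; last exact: dualMn.
rewrite [RHS]row_sum_delta; apply: eq_bigr => k _.
by rewrite (dualfMn fD) // fd -scaler_nat natr_Zp.
Qed.

Lemma sub_disc_lift_intvec c : in_dual G c -> intvec (c - disc_lift (f c)).
Proof.
move=> hc; have hL := disc_lift_dual (f c).
apply/fker; first exact/dualD/dualN.
by rewrite fD ?(dualfN fD) ?f_disc_lift ?subrr //; exact: dualN.
Qed.

Lemma pform_basis_int k l : pform (d k) (d l) \is a Num.int.
Proof.
have pd : intvec (d k *+ p).
  by apply/fker; [exact: dualMn | rewrite (dualfMn fD) // fd -scaler_nat pchar_Fp_0 ?scale0r].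
by have /intrP := d_dual l pd; rewrite bformC // bformMnl mulr_natl.
Qed.

Lemma pform_disc_liftE a a' :
  pform (disc_lift a) (disc_lift a') = \sum_k \sum_l pform (d k) (d l) *+ a 0 k *+ a' 0 l.
Proof.
rewrite bform_suml mulr_sumr; apply: eq_bigr => k _.
rewrite bform_sumr mulr_sumr; apply: eq_bigr => l _.
by rewrite bformMnl bformMnr mulrnAC -!mulrnAr.
Qed.

Lemma pform_disc_lift_int a a' : pform (disc_lift a) (disc_lift a') \is a Num.int.
Proof.
by rewrite pform_disc_liftE rpred_sum // => k _; rewrite rpred_sum // => l _;
  rewrite !rpredMn ?pform_basis_int.
Qed.

Lemma ratFp_pform_disc_lift a a' :
  ratFp p (pform (disc_lift a) (disc_lift a')) = '[a *m disc_gram, a'].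
Proof.
have termE k l :
    ratFp p (pform (d k) (d l) *+ a 0 k *+ a' 0 l) = a 0 k * disc_gram k l * a' 0 l.
  rewrite !ratFpMn ?rpredMn ?pform_basis_int // mxE.
  rewrite -[_ *+ (a' 0 l : nat)]mulr_natr -[_ *+ (a 0 k : nat)]mulr_natr !natr_Zp.
  by rewrite [ratFp _ _ * _]mulrC.
rewrite pform_disc_liftE mulmx_quadE ratFp_sum => [|k]; last first.
  by rewrite rpred_sum // => l _; rewrite !rpredMn ?pform_basis_int.
apply: eq_bigr => k _; rewrite ratFp_sum => [|l]; last by rewrite !rpredMn ?pform_basis_int.
by apply: eq_bigr => l _; apply: termE.
Qed.

Lemma bform_sub_disc_lift_int c c' : in_dual G c -> in_dual G c' ->
  bform G c c' - bform G (disc_lift (f c)) (disc_lift (f c')) \is a Num.int.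
Proof.
move=> hc hc'; set L := disc_lift (f c); set L' := disc_lift (f c').
have -> : bform G c c' - bform G L L' = bform G c' (c - L) + bform G L (c' - L').
  by rewrite [bform G c' _]bformC // bformDl bformDr bformNl bformNr addrA subrK.
by apply: rpredD; apply/intrP; [apply: hc' | apply: disc_lift_dual];
  apply: sub_disc_lift_intvec.
Qed.

Lemma pform_disc_lift_split c c' : pform c c' =
  p%:R * (bform G c c' - bform G (disc_lift (f c)) (disc_lift (f c')))
  + pform (disc_lift (f c)) (disc_lift (f c')).
Proof. by rewrite -mulrDr subrK. Qed.

Lemma pform_dual_int c c' : in_dual G c -> in_dual G c' -> pform c c' \is a Num.int.
Proof.
move=> hc hc'; rewrite pform_disc_lift_split; apply: rpredD; last exact: pform_disc_lift_int.
by rewrite mulr_natl rpredMn ?bform_sub_disc_lift_int.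
Qed.

Lemma ratFp_pform c c' : in_dual G c -> in_dual G c' ->
  ratFp p (pform c c') = '[f c *m disc_gram, f c'].
Proof.
move=> hc hc'; have hi := bform_sub_disc_lift_int hc hc'.
rewrite pform_disc_lift_split ratFpD ?pform_disc_lift_int //; last by rewrite mulr_natl rpredMn.
by rewrite ratFp_pmul // add0r ratFp_pform_disc_lift.
Qed.

Lemma disc_gram_int_pair c c' : in_dual G c -> in_dual G c' ->
  bform G c c' \is a Num.int -> '[f c *m disc_gram, f c'] = 0.
Proof. by move=> hc hc' hcc'; rewrite -ratFp_pform // ratFp_pmul. Qed.

Lemma disc_gram_row_free : row_free disc_gram.
Proof.
rewrite -kermx_eq0; apply/eqP/row_matrixP => i; rewrite row0.
set x := row i (kermx disc_gram); have xM : x *m disc_gram = 0.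
  by rewrite -row_mul mulmx_ker row0.
have hc := disc_lift_dual x.
have c_d k : bform G (disc_lift x) (d k) \is a Num.int.
  have := ratFp_eq0 p_pr (pform_dual_int hc (d_dual k)).
  rewrite [_ / _]mulrC mulKf ?pnatr_eq0 -?lt0n ?prime_gt0 //; apply.
  by rewrite ratFp_pform ?f_disc_lift // xM mul0mx mxE.
suff /(fker hc) : intvec (disc_lift x) by rewrite f_disc_lift.
apply: (bidual_intvec Gsym Gu) => y hy.
rewrite -(subrK (disc_lift (f y)) y) bformDr rpredD //.
  exact/intrP/hc/sub_disc_lift_intvec.
by rewrite bform_sumr rpred_sum // => k _; rewrite bformMnr rpredMn.
Qed.

End DiscriminantForm.

Lemma gram_factor_unitmx n (G : 'M[int]_n) (B : 'M[rat]_n) :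
  pos_def_integral_gram G -> B *m B^T = gramQ G -> B \in unitmx.
Proof.
move=> [_ Gpos] BBt; rewrite unitmxE unitfE; apply/negP => /det0P[v v_neq0 vB].
by have := Gpos v v_neq0; rewrite (bform_factor _ _ BBt) vB mul0mx mxE ltxx.
Qed.

Lemma bform_pullback n (G : 'M[int]_n) (B : 'M[rat]_n) x y :
  B \in unitmx -> B *m B^T = gramQ G ->
  bform G (x *m invmx B) (y *m invmx B) = '[x, y].
Proof. by move=> Bu BBt; rewrite (bform_factor _ _ BBt) !mulmxKV. Qed.

(* The rows of B span the image of L, so x *m invmx B are the coordinates of x in L. *)
Section RootlessEmbedding.
Variables (G : 'M[int]_16) (B : 'M[rat]_16) (F : fieldType) (V : lmodType F).
Variable f : 'rV[rat]_16 -> V.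
Hypotheses (Gpos : pos_def_integral_gram G) (Groot : rootless G).
Hypotheses (BBt : B *m B^T = gramQ G) (HB : forall i, in_HS16 (row i B)).
Hypothesis fD : forall x y, in_dual G x -> in_dual G y -> f (x + y) = f x + f y.
Hypothesis fker : forall x, in_dual G x -> (f x = 0 <-> intvec x).
Hypothesis two_neq0 : 2%:R != 0 :> F.

Let Bu : B \in unitmx := gram_factor_unitmx Gpos BBt.

Lemma pullback_D_dual x : in_D x -> in_dual G (x *m invmx B).
Proof.
move=> hx y hy; apply/intrP; rewrite (bform_factor _ _ BBt) mulmxKV //.
by apply: dot_D_HS16 => //; exact: in_HS16_comb.
Qed.

Lemma pullback_root_neq0 x : in_D x -> '[x] = 2 -> f (x *+ 2 *m invmx B) != 0.
Proof.
move=> hx x2; have hxB := pullback_D_dual hx.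
rewrite -scaler_nat -scalemxAl scaler_nat (dualfMn fD) //; apply/eqP => /(double_eq0 two_neq0).
by move/(fker hxB) => xB_int; apply: Groot; exists (x *m invmx B); rewrite bform_pullback.
Qed.

Definition root_vec (i : 'I_16) : 'rV[rat]_16 := 'e_i *+ 2 *m invmx B.

Lemma root_vec_dual i : in_dual G (root_vec i).
Proof. exact/pullback_D_dual/in_D_delta2. Qed.

Lemma root_vec_pair_int i j : bform G (root_vec i) (root_vec j) \is a Num.int.
Proof.
by rewrite bform_pullback // dot_intvec //; [case: (in_D_delta2 i) | case: (in_D_delta2 j)].
Qed.

Lemma root_image_sign i j : i != j ->
  f (root_vec i) != f (root_vec j) /\ f (root_vec i) != - f (root_vec j).
Proof.
move=> ij; have dj := root_vec_dual j.
have fB : f (('e_i - 'e_j) *+ 2 *m invmx B) = f (root_vec i) - f (root_vec j).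
  by rewrite -(dualfN fD dj) -(fD (root_vec_dual i) (dualN dj)) -mulmxBl -mulrnBl.
have fDj : f (('e_i + 'e_j) *+ 2 *m invmx B) = f (root_vec i) + f (root_vec j).
  by rewrite -(fD (root_vec_dual i) dj) /root_vec -mulmxDl -mulrnDl.
split; apply/eqP => e.
- by move/eqP: (pullback_root_neq0 (in_D_deltaB i j) (dot_deltaB ij)); rewrite fB e subrr.
- by move/eqP: (pullback_root_neq0 (in_D_deltaD i j) (dot_deltaD ij)); rewrite fDj e addNr.
Qed.

End RootlessEmbedding.

Theorem lemma4p2 (G : 'M[int]_16) :
  pos_def_integral_gram G ->
  rootless G ->
  disc_group_iso G ('rV['F_5]_4) ->
  ~ iso_to_sublattice_HS16 G.
Proof.
move=> Gpos Groot [f [fD fsurj fker]] [B [HB BBt]].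
have [Gsym _] := Gpos; have p_pr : prime 5 by []; have two_neq0 : 2%:R != 0 :> 'F_5 by [].
have Bu := gram_factor_unitmx Gpos BBt.
have Gu : gramQ G \in unitmx by rewrite -BBt unitmx_mul unitmx_tr Bu.
have [d d_dual fd] : exists2 d : 'I_4 -> 'rV[rat]_16,
    forall k, in_dual G (d k) & forall k, f (d k) = 'e_k.
  exact: fin_all_exists2 (fun k => fsurj ('e_k)).
pose W := \matrix_i f (root_vec B i).
have WMW : W *m disc_gram 5 G d *m W^T = 0.
  apply/matrixP => i j; rewrite mulmx_tr_entry !rowK [RHS]mxE.
  apply: (disc_gram_int_pair p_pr Gsym fD fker d_dual fd);
    [exact: root_vec_dual | exact: root_vec_dual | exact: root_vec_pair_int].
have Mfree := disc_gram_row_free p_pr Gsym Gu fD fker d_dual fd.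
have rankW : (\rank W <= 2)%N by rewrite -leq_double (isotropic_rank Mfree WMW).
suff : (16.*2.-1 <= #|rowg W|)%N.
  by rewrite card_rowg card_Fp // => /leq_trans/(_ (leq_pexp2l (isT : 0 < 5)%N rankW)).
apply: card_signed_family (double_eq0 two_neq0)
  (root_image_sign Gpos Groot BBt HB fD fker two_neq0) _ _.
- by move=> i; rewrite mem_rowg -(rowK (fun i => f (root_vec B i)) i) row_sub.
- by move=> v; rewrite !mem_rowg eqmx_opp.
Qed.
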